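(* Let $X,Y$ be real Banach spaces and let $H$ be a closed subspace of $L(X,Y)$ with $X^*\otimes Y\subseteq H$ such that $H$ has octahedral norm. Assume that the norm of $X^*$ is non-rough. Then $Y$ has octahedral norm.
   Context: The norm of a Banach space $Z$ is octahedral if for every finite-dimensional subspace $E$ and $\varepsilon>0$ there is $y\in S_Z$ with $\|x+\lambda y\|\ge(1-\varepsilon)(\|x\|+|\lambda|)$ for all $x\in E$, scalars $\lambda$. For $u\in S_Z$, the roughness of $Z$ at $u$ is $\eta(Z,u)=\limsup_{\|h\|\to0}\frac{\|u+h\|+\|u-h\|-2}{\|h\|}$. $Z$ is $\varepsilon$-rough if $\eta(Z,u)\ge\varepsilon$ for every $u\in S_Z$; $Z$ (its norm) is rough if it is $\varepsilon$-rough for some $\varepsilon>0$, and non-rough otherwise. $X^*\otimes Y$ is the space of finite-rank operators spanned by $x\mapsto x^*(x)y$. *)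

From Stdlib Require Import Reals Lra ClassicalEpsilon.
Open Scope R_scope.

Record NormedSpace := {
  car :> Type;
  zero : car;
  add : car -> car -> car;
  opp : car -> car;
  scal : R -> car -> car;
  norm : car -> R;
  add_assoc : forall x y z, add (add x y) z = add x (add y z);
  add_comm : forall x y, add x y = add y x;
  add_zero : forall x, add x zero = x;
  add_opp : forall x, add x (opp x) = zero;
  scal_assoc : forall a b x, scal a (scal b x) = scal (a * b) x;
  scal_one : forall x, scal 1 x = x;
  scal_distr_l : forall a x y, scal a (add x y) = add (scal a x) (scal a y);
  scal_distr_r : forall a b x, scal (a + b) x = add (scal a x) (scal b x);
  norm_eq0 : forall x, norm x = 0 -> x = zero;
  norm_scal : forall a x, norm (scal a x) = Rabs a * norm x;
  norm_triangle : forall x y, norm (add x y) <= norm x + norm y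
}.

Arguments zero {n}.
Arguments add {n}.
Arguments opp {n}.
Arguments scal {n}.
Arguments norm {n}.

Definition Cauchy_seq {X : NormedSpace} (u : nat -> X) : Prop :=
  forall eps, 0 < eps -> exists N, forall m n, (N <= m)%nat -> (N <= n)%nat ->
    norm (add (u m) (opp (u n))) < eps.

Definition converges_to {X : NormedSpace} (u : nat -> X) (l : X) : Prop :=
  forall eps, 0 < eps -> exists N, forall n, (N <= n)%nat ->
    norm (add (u n) (opp l)) < eps.

Definition Banach (X : NormedSpace) : Prop :=
  forall u : nat -> X, Cauchy_seq u -> exists l, converges_to u l.

Definition R_NormedSpace : NormedSpace.
Proof.
  refine (@Build_NormedSpace R 0 Rplus Ropp Rmult Rabs _ _ _ _ _ _ _ _ _ _ _).
  - intros; ring.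
  - intros; ring.
  - intros; ring.
  - intros; ring.
  - intros; ring.
  - intros; ring.
  - intros; ring.
  - intros; ring.
  - intros x Hx. destruct (Rcase_abs x); unfold Rabs in Hx;
      destruct (Rcase_abs x); lra.
  - intros; apply Rabs_mult.
  - intros; apply Rabs_triang.
Defined.

(* A "vector structure" with a norm-like function, used to speak about
   (subspaces of) spaces of operators, whose elements are functions. *)
Record VStruct := {
  vcar :> Type;
  vzero : vcar;
  vadd : vcar -> vcar -> vcar;
  vscal : R -> vcar -> vcar;
  vnorm : vcar -> R
}.
Arguments vzero {v}.
Arguments vadd {v}.
Arguments vscal {v}.
Arguments vnorm {v}.

Definition VS_of (X : NormedSpace) : VStruct :=
  @Build_VStruct X zero add scal norm.

Fixpoint lincomb {V : VStruct} (n : nat) (c : nat -> R) (e : nat -> V) : V :=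
  match n with
  | O => vzero
  | S k => vadd (lincomb k c e) (vscal (c k) (e k))
  end.

Definition octahedral_in (V : VStruct) (P : V -> Prop) : Prop :=
  forall (n : nat) (e : nat -> V), (forall i, (i < n)%nat -> P (e i)) ->
  forall eps, 0 < eps ->
  exists y, P y /\ vnorm y = 1 /\
    forall (c : nat -> R) (lam : R),
      vnorm (vadd (lincomb n c e) (vscal lam y))
        >= (1 - eps) * (vnorm (lincomb n c e) + Rabs lam).

Definition octahedral (X : NormedSpace) : Prop :=
  octahedral_in (VS_of X) (fun _ => True).

(* eta(P, u) >= eps, where
   eta(P,u) = limsup_{||h||->0, h in P} (||u+h|| + ||u-h|| - 2)/||h||,
   unfolded: for every delta > 0 the supremum over 0 < ||h|| < delta of the
   quotient is >= eps. *)
Definition roughness_ge (V : VStruct) (P : V -> Prop) (u : V) (eps : R) : Prop :=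
  forall delta, 0 < delta -> forall eps', eps' < eps ->
  exists h, P h /\ 0 < vnorm h /\ vnorm h < delta /\
    (vnorm (vadd u h) + vnorm (vadd u (vscal (-1) h)) - 2) / vnorm h > eps'.

Definition rough_in (V : VStruct) (P : V -> Prop) : Prop :=
  exists eps, 0 < eps /\
    forall u, P u -> vnorm u = 1 -> roughness_ge V P u eps.

Definition is_linear {X Y : NormedSpace} (T : X -> Y) : Prop :=
  (forall x y, T (add x y) = add (T x) (T y)) /\
  (forall a x, T (scal a x) = scal a (T x)).

Definition is_bounded {X Y : NormedSpace} (T : X -> Y) : Prop :=
  exists M, forall x, norm (T x) <= M * norm x.

Definition bounded_linear {X Y : NormedSpace} (T : X -> Y) : Prop :=
  is_linear T /\ is_bounded T.

(* Operator norm: sup { ||T x|| : ||x|| <= 1 } (well defined for bounded T). *)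
Definition opnorm {X Y : NormedSpace} (T : X -> Y) : R :=
  epsilon (inhabits 0)
    (fun r => is_lub (fun s => exists x : X, norm x <= 1 /\ s = norm (T x)) r).

(* The ambient structure of operators X -> Y with pointwise operations and
   the operator norm; L(X,Y) is the subset of bounded linear ones. *)
Definition Op_VS (X Y : NormedSpace) : VStruct :=
  @Build_VStruct (X -> Y) (fun _ => zero) (fun S T x => add (S x) (T x))
    (fun a T x => scal a (T x)) opnorm.

Definition closed_subspace_L (X Y : NormedSpace) (H : (X -> Y) -> Prop) : Prop :=
  (forall T, H T -> bounded_linear T) /\
  H (fun _ => zero) /\
  (forall S T, H S -> H T -> H (fun x => add (S x) (T x))) /\
  (forall a T, H T -> H (fun x => scal a (T x))) /\
  (forall (Tn : nat -> X -> Y) (T : X -> Y),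
     (forall n, H (Tn n)) -> bounded_linear T ->
     (forall eps, 0 < eps -> exists N, forall n, (N <= n)%nat ->
        opnorm (fun x => add (Tn n x) (opp (T x))) < eps) ->
     H T).

(* X^* (x) Y is contained in H: every rank-one operator x |-> x^*(x) y. *)
Definition contains_finite_rank (X Y : NormedSpace) (H : (X -> Y) -> Prop) : Prop :=
  forall (f : X -> R_NormedSpace) (y : Y),
    bounded_linear f -> H (fun x => scal (f x) y).

Definition dual_VS (X : NormedSpace) : VStruct := Op_VS X R_NormedSpace.
Definition in_dual (X : NormedSpace) : (X -> R_NormedSpace) -> Prop :=
  fun f => bounded_linear f.

(* Non-roughness of X^* gives a norm-one functional x^* whose slices
   {x in B_X : x^*(x) >= 1 - a} have diameter at most eps + 4a/d: a functional
   norming x1 - x2, scaled by d/2 and added to or subtracted from x^*, would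
   otherwise witness roughness at x^*.  Given y_1, ..., y_n in Y, the octahedrality
   of H applied to the rank-one operators x^* (x) y_i and x^* (x) z0 (z0 a unit
   vector) yields T in S_H such that ||x^*(.) y + l T|| is almost ||y|| + |l|,
   almost attained at points x with x^*(x) almost 1.  All these points lie in one
   thin slice together with a fixed x0, so T x is close to T x0, and T x0 / ||T x0||
   is the required direction of Y. *)

From Stdlib Require Import Reals Lra Lia ClassicalEpsilon Classical FunctionalExtensionality.
From mathcomp Require boolp classical_sets.
Open Scope R_scope.

Lemma zorn_preorder (T : Type) (t0 : T) (le : T -> T -> Prop) :
  (forall t, le t t) -> (forall r s t, le r s -> le s t -> le r t) ->
  (forall A : T -> Prop, (forall s t, A s -> A t -> le s t \/ le t s) ->
     exists t, forall s, A s -> le s t) ->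
  exists t, forall s, le t s -> le s t.
Proof.
  intros refl trans chains.
  assert (E : forall a b, boolp.asbool (le a b) = true <-> le a b)
    by (intros a b; symmetry; apply (Bool.reflect_iff _ _ (boolp.asboolP (le a b)))).
  destruct (@classical_sets.ZL_preorder T t0 (fun a b => boolp.asbool (le a b)))
    as [t Ht].
  - intro; apply E; auto.
  - intros r s u Hrs Hsu; apply E; apply E in Hrs; apply E in Hsu; eauto.
  - intros A HA. destruct (chains A) as [t Hub].
    + intros s u As Au. destruct (HA s u As Au) as [h|h]; [left|right]; apply E; exact h.
    + exists t; intros; apply E; auto.
  - exists t. intros s Hs. apply E, Ht, E, Hs.
Qed.

Lemma epsilon_eq (A : Type) (i : inhabited A) (P : A -> Prop) (a : A) :
  P a -> (forall b, P b -> b = a) -> epsilon i P = a.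
Proof. intros Pa uniq. apply uniq, epsilon_spec. exists a; exact Pa. Qed.

Lemma Rabs_m1 : Rabs (-1) = 1.
Proof. unfold Rabs; destruct (Rcase_abs (-1)); lra. Qed.

Section NormedSpaceFacts.
Variable X : NormedSpace.
Implicit Types x y z u v : X.

Lemma add_zero_l x : add zero x = x.
Proof. rewrite add_comm; apply add_zero. Qed.

Lemma add_reg_l x y z : add x y = add x z -> y = z.
Proof.
  intro E. assert (E' := f_equal (add (opp x)) E).
  rewrite <- !add_assoc, (add_comm _ (opp x) x), add_opp, !add_zero_l in E'.
  exact E'.
Qed.

Lemma scal_zero_l x : scal 0 x = zero.
Proof.
  apply (add_reg_l (scal 0 x)). rewrite add_zero, <- scal_distr_r, Rplus_0_r.
  reflexivity.
Qed.

Lemma scal_zero_r a : scal a (@zero X) = zero.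
Proof. rewrite <- (scal_zero_l zero), scal_assoc, Rmult_0_r; reflexivity. Qed.

Lemma sub_self x : add x (scal (-1) x) = zero.
Proof.
  rewrite <- (scal_one _ x) at 1. rewrite <- scal_distr_r, Rplus_opp_r.
  apply scal_zero_l.
Qed.

Lemma add_move_r u v w : add u v = w -> u = add w (scal (-1) v).
Proof. intros <-. rewrite add_assoc, sub_self, add_zero; reflexivity. Qed.

Lemma add_swap u v w z : add (add u v) (add w z) = add (add u w) (add v z).
Proof.
  rewrite !add_assoc. f_equal. rewrite <- !add_assoc. f_equal. apply add_comm.
Qed.

Lemma scal_sub a b x : add (scal a x) (scal (-1) (scal b x)) = scal (a - b) x.
Proof. rewrite scal_assoc, <- scal_distr_r. f_equal; ring. Qed.

Lemma norm_zero : norm (@zero X) = 0.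
Proof. rewrite <- (scal_zero_l zero), norm_scal, Rabs_R0; ring. Qed.

Lemma norm_neg x : norm (scal (-1) x) = norm x.
Proof. rewrite norm_scal, Rabs_m1; ring. Qed.

Lemma norm_ge0 x : 0 <= norm x.
Proof.
  pose proof (norm_triangle _ x (scal (-1) x)) as T.
  rewrite sub_self, norm_zero, norm_neg in T. lra.
Qed.

Lemma norm_add_ge x y : norm x - norm y <= norm (add x y).
Proof.
  pose proof (norm_triangle _ (add x y) (scal (-1) y)) as T.
  rewrite add_assoc, sub_self, add_zero, norm_neg in T. lra.
Qed.

Lemma norm_gt0 x : x <> zero -> 0 < norm x.
Proof.
  intro nz. destruct (norm_ge0 x) as [h|h]; [exact h|].
  exfalso; apply nz, norm_eq0; auto.
Qed.

Lemma norm_normalize x : 0 < norm x -> norm (scal (/ norm x) x) = 1.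
Proof.
  intro Hx. rewrite norm_scal, Rabs_right by (left; apply Rinv_0_lt_compat, Hx).
  apply Rinv_l; lra.
Qed.

Lemma norm_add_shift u v w : norm (add u v) <= norm (add w v) + norm (add u (scal (-1) w)).
Proof.
  replace (add u v) with (add (add w v) (add u (scal (-1) w))).
  - apply norm_triangle.
  - rewrite add_swap, (add_comm _ w u), add_assoc, (add_comm _ v), <- (add_assoc _ w),
      sub_self, add_zero_l.
    reflexivity.
Qed.

Lemma scal_inj_l a b x : x <> zero -> scal a x = scal b x -> a = b.
Proof.
  intros nz E. apply NNPP. intro ne. apply nz.
  assert (E0 : scal (a - b) x = zero) by (rewrite <- scal_sub, E; apply sub_self).
  rewrite <- (scal_one _ x), <- (Rinv_l (a - b)) by lra.
  rewrite <- scal_assoc, E0; apply scal_zero_r.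
Qed.

End NormedSpaceFacts.

Section HahnBanach.
Variables (X : NormedSpace) (w : X).

Record norming_ext := {
  ext_dom : X -> Prop;
  ext_fun : X -> R;
  ext_dom_zero : ext_dom zero;
  ext_dom_add : forall x y, ext_dom x -> ext_dom y -> ext_dom (add x y);
  ext_dom_scal : forall a x, ext_dom x -> ext_dom (scal a x);
  ext_fun_add : forall x y, ext_dom x -> ext_dom y ->
    ext_fun (add x y) = ext_fun x + ext_fun y;
  ext_fun_scal : forall a x, ext_dom x -> ext_fun (scal a x) = a * ext_fun x;
  ext_fun_le : forall x, ext_dom x -> ext_fun x <= norm x;
  ext_dom_w : ext_dom w;
  ext_fun_w : ext_fun w = norm w }.

Definition ext_le (p q : norming_ext) : Prop :=
  (forall x, ext_dom p x -> ext_dom q x) /\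
  (forall x, ext_dom p x -> ext_fun q x = ext_fun p x).

Lemma ext_le_refl p : ext_le p p.
Proof. split; auto. Qed.

Lemma ext_le_trans p q r : ext_le p q -> ext_le q r -> ext_le p r.
Proof.
  intros [pq fpq] [qr fqr]. split; auto.
  intros x Dx. rewrite fqr; auto.
Qed.

Lemma ext_chain_ub (p0 : norming_ext) (A : norming_ext -> Prop) :
  (forall p q, A p -> A q -> ext_le p q \/ ext_le q p) ->
  exists u, forall p, A p -> ext_le p u.
Proof.
  intro chain. destruct (classic (exists p, A p)) as [[p1 Ap1]|empty].
  2:{ exists p0. intros p Ap. exfalso; apply empty; eauto. }
  set (D := fun x => exists p, A p /\ ext_dom p x).
  set (f := fun x => epsilon (inhabits 0)
                       (fun r => exists p, A p /\ ext_dom p x /\ ext_fun p x = r)).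
  assert (Hf : forall p x, A p -> ext_dom p x -> f x = ext_fun p x).
  { intros p x Ap Dx. apply epsilon_eq; [eauto|].
    intros r [q [Aq [Dq <-]]].
    destruct (chain p q Ap Aq) as [[_ E]|[_ E]]; [apply E | symmetry; apply E]; auto. }
  assert (common : forall x y, D x -> D y -> exists r, A r /\ ext_dom r x /\ ext_dom r y).
  { intros x y [p [Ap Dx]] [q [Aq Dy]].
    destruct (chain p q Ap Aq) as [[pq _]|[qp _]]; [exists q | exists p]; auto. }
  unshelve eexists (Build_norming_ext D f _ _ _ _ _ _ _ _).
  - exists p1; split; [exact Ap1 | apply ext_dom_zero].
  - intros x y Dx Dy. destruct (common x y Dx Dy) as [r [Ar [Rx Ry]]].
    exists r; split; [exact Ar | apply ext_dom_add; auto].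
  - intros a x [p [Ap Dx]]. exists p; split; [exact Ap | apply ext_dom_scal; auto].
  - intros x y Dx Dy. destruct (common x y Dx Dy) as [r [Ar [Rx Ry]]].
    rewrite (Hf r (add x y)), (Hf r x), (Hf r y) by (auto; apply ext_dom_add; auto).
    apply ext_fun_add; auto.
  - intros a x [p [Ap Dx]].
    rewrite (Hf p (scal a x)), (Hf p x) by (auto; apply ext_dom_scal; auto).
    apply ext_fun_scal; auto.
  - intros x [p [Ap Dx]]. rewrite (Hf p x); auto. apply ext_fun_le; auto.
  - exists p1; split; [exact Ap1 | apply ext_dom_w].
  - rewrite (Hf p1 w Ap1 (ext_dom_w p1)). apply ext_fun_w.
  - intros p Ap. split; simpl.
    + intros x Dx; exists p; auto.
    + intros x Dx; apply Hf; auto.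
Qed.

Lemma ext_gap (p : norming_ext) z : exists c,
  (forall x, ext_dom p x -> ext_fun p x - norm (add x (scal (-1) z)) <= c) /\
  (forall y, ext_dom p y -> c <= norm (add y z) - ext_fun p y).
Proof.
  set (lower := fun r => exists x, ext_dom p x /\ r = ext_fun p x - norm (add x (scal (-1) z))).
  (* [f x + f y = f (x + y) <= |x - z| + |y + z|] separates the two families. *)
  assert (sep : forall x y, ext_dom p x -> ext_dom p y ->
            ext_fun p x - norm (add x (scal (-1) z)) <= norm (add y z) - ext_fun p y).
  { intros x y Dx Dy.
    pose proof (norm_triangle _ (add x (scal (-1) z)) (add y z)) as T.
    rewrite add_swap, (add_comm _ (scal (-1) z) z), sub_self, add_zero in T.
    pose proof (ext_fun_le p (add x y) (ext_dom_add p x y Dx Dy)) as L.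
    rewrite ext_fun_add in L; auto. lra. }
  destruct (completeness lower) as [c [ub least]].
  - exists (norm (add zero z) - ext_fun p zero).
    intros r [x [Dx ->]]. apply sep; auto. apply ext_dom_zero.
  - eexists; exists zero; split; [apply ext_dom_zero | reflexivity].
  - exists c. split.
    + intros x Dx. apply ub. exists x; auto.
    + intros y Dy. apply least. intros r [x [Dx ->]]. apply sep; auto.
Qed.

Lemma ext_decomp_unique (p : norming_ext) z x a x' a' :
  ~ ext_dom p z -> ext_dom p x -> ext_dom p x' ->
  add x (scal a z) = add x' (scal a' z) -> a = a' /\ x = x'.
Proof.
  intros Nz Dx Dx' E.
  apply add_move_r in E. rewrite add_assoc, scal_sub in E.
  destruct (Req_dec a a') as [<-|ne].
  - split; [reflexivity|]. rewrite E, Rminus_diag, scal_zero_l, add_zero. reflexivity.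
  - exfalso. apply Nz. symmetry in E. rewrite add_comm in E. apply add_move_r in E.
    rewrite <- (scal_one _ z), <- (Rinv_l (a' - a)), <- scal_assoc, E by lra.
    apply ext_dom_scal, ext_dom_add, ext_dom_scal; auto.
Qed.

Lemma ext_gap_dominated (p : norming_ext) z c :
  (forall x, ext_dom p x -> ext_fun p x - norm (add x (scal (-1) z)) <= c) ->
  (forall y, ext_dom p y -> c <= norm (add y z) - ext_fun p y) ->
  forall x a, ext_dom p x -> ext_fun p x + a * c <= norm (add x (scal a z)).
Proof.
  intros below above x a Dx.
  destruct (Rtotal_order a 0) as [neg|[->|pos]].
  - specialize (below (scal (/ - a) x) (ext_dom_scal p _ _ Dx)).
    replace (add (scal (/ - a) x) (scal (-1) z)) with (scal (/ - a) (add x (scal a z)))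
      in below by (rewrite scal_distr_l, scal_assoc; do 2 f_equal; field; lra).
    rewrite ext_fun_scal, norm_scal, Rabs_right in below
      by (auto; left; apply Rinv_0_lt_compat; lra).
    apply (Rmult_le_compat_l (- a)) in below; [|lra].
    replace (- a * (/ - a * ext_fun p x - / - a * norm (add x (scal a z))))
      with (ext_fun p x - norm (add x (scal a z))) in below by (field; lra).
    lra.
  - rewrite scal_zero_l, add_zero, Rmult_0_l, Rplus_0_r. apply ext_fun_le, Dx.
  - specialize (above (scal (/ a) x) (ext_dom_scal p _ _ Dx)).
    replace (add (scal (/ a) x) z) with (scal (/ a) (add x (scal a z)))
      in above by (rewrite scal_distr_l, scal_assoc, Rinv_l, scal_one by lra; reflexivity).
    rewrite ext_fun_scal, norm_scal, Rabs_right in above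
      by (auto; left; apply Rinv_0_lt_compat; lra).
    apply (Rmult_le_compat_l a) in above; [|lra].
    replace (a * (/ a * norm (add x (scal a z)) - / a * ext_fun p x))
      with (norm (add x (scal a z)) - ext_fun p x) in above by (field; lra).
    lra.
Qed.

Lemma ext_step (p : norming_ext) z : ~ ext_dom p z -> exists q, ext_le p q /\ ext_dom q z.
Proof.
  intro Nz. destruct (ext_gap p z) as [c [below above]].
  set (D := fun v => exists x a, ext_dom p x /\ v = add x (scal a z)).
  set (f := fun v => epsilon (inhabits 0) (fun r => exists x a,
              ext_dom p x /\ v = add x (scal a z) /\ r = ext_fun p x + a * c)).
  assert (Hf : forall x a, ext_dom p x -> f (add x (scal a z)) = ext_fun p x + a * c).
  { intros x a Dx. apply epsilon_eq; [eauto 6|].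
    intros r [x' [a' [Dx' [E ->]]]].
    destruct (ext_decomp_unique p z x a x' a' Nz Dx Dx' E) as [<- <-]. reflexivity. }
  assert (Hx0 : forall x, x = add x (scal 0 z))
    by (intro; rewrite scal_zero_l, add_zero; reflexivity).
  assert (comb_add : forall x y a b,
            add (add x (scal a z)) (add y (scal b z)) = add (add x y) (scal (a + b) z))
    by (intros; rewrite add_swap, scal_distr_r; reflexivity).
  assert (comb_scal : forall t x a, scal t (add x (scal a z)) = add (scal t x) (scal (t * a) z))
    by (intros; rewrite scal_distr_l, scal_assoc; reflexivity).
  unshelve eexists (Build_norming_ext D f _ _ _ _ _ _ _ _).
  - exists zero, 0. split; [apply ext_dom_zero | apply Hx0].
  - intros u v [x [a [Dx ->]]] [y [b [Dy ->]]].
    exists (add x y), (a + b). split; [apply ext_dom_add; auto | apply comb_add].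
  - intros t u [x [a [Dx ->]]].
    exists (scal t x), (t * a). split; [apply ext_dom_scal; auto | apply comb_scal].
  - intros u v [x [a [Dx ->]]] [y [b [Dy ->]]].
    rewrite comb_add, !Hf, ext_fun_add by (auto; apply ext_dom_add; auto). ring.
  - intros t u [x [a [Dx ->]]].
    rewrite comb_scal, !Hf, ext_fun_scal by (auto; apply ext_dom_scal; auto). ring.
  - intros u [x [a [Dx ->]]]. rewrite Hf by exact Dx. apply ext_gap_dominated; auto.
  - exists w, 0. split; [apply ext_dom_w | apply Hx0].
  - rewrite (Hx0 w), Hf, <- Hx0, ext_fun_w by apply ext_dom_w. ring.
  - split; [split|]; simpl.
    + intros x Dx. exists x, 0. split; [exact Dx | apply Hx0].
    + intros x Dx. rewrite (Hx0 x), Hf, <- Hx0 by exact Dx. ring.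
    + exists zero, 1. split; [apply ext_dom_zero | rewrite scal_one, add_zero_l; reflexivity].
Qed.

Hypothesis w_neq0 : w <> zero.

Definition span_ext : norming_ext.
Proof.
  set (f := fun x => epsilon (inhabits 0) (fun r => exists t, x = scal t w /\ r = t * norm w)).
  assert (Hf : forall t, f (scal t w) = t * norm w).
  { intro t. apply epsilon_eq; [eauto|].
    intros r [t' [E ->]]. apply scal_inj_l in E; [subst; reflexivity | exact w_neq0]. }
  refine (Build_norming_ext (fun x => exists t, x = scal t w) f _ _ _ _ _ _ _ _).
  - exists 0. symmetry; apply scal_zero_l.
  - intros x y [t ->] [s ->]. exists (t + s). symmetry; apply scal_distr_r.
  - intros a x [t ->]. exists (a * t). apply scal_assoc.
  - intros x y [t ->] [s ->]. rewrite <- scal_distr_r, !Hf. ring.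
  - intros a x [t ->]. rewrite scal_assoc, !Hf. ring.
  - intros x [t ->]. rewrite Hf, norm_scal.
    apply Rmult_le_compat_r; [apply norm_ge0 | apply Rle_abs].
  - exists 1. symmetry; apply scal_one.
  - rewrite <- (scal_one _ w) at 1. rewrite Hf. ring.
Defined.

Lemma norming_functional_nz : exists g : X -> R,
  (forall x y, g (add x y) = g x + g y) /\ (forall a x, g (scal a x) = a * g x) /\
  (forall x, g x <= norm x) /\ g w = norm w.
Proof.
  destruct (zorn_preorder norming_ext span_ext ext_le ext_le_refl ext_le_trans
              (ext_chain_ub span_ext)) as [m maximal].
  assert (total : forall x, ext_dom m x).
  { intro z. apply NNPP. intro Nz. destruct (ext_step m z Nz) as [q [mq Dq]].
    apply Nz, (proj1 (maximal q mq)), Dq. }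
  exists (ext_fun m). repeat split; intros;
    [apply ext_fun_add | apply ext_fun_scal | apply ext_fun_le | apply ext_fun_w]; auto.
Qed.

End HahnBanach.

Lemma norming_functional (X : NormedSpace) (w : X) : exists g : X -> R_NormedSpace,
  is_linear g /\ (forall x, Rabs (g x) <= norm x) /\ g w = norm w.
Proof.
  destruct (classic (w = zero)) as [->|nz].
  - exists (fun _ => 0). repeat split; intros; simpl; try ring.
    + rewrite Rabs_R0; apply norm_ge0.
    + rewrite norm_zero; reflexivity.
  - destruct (norming_functional_nz X w nz) as [g [gadd [gscal [gle gw]]]].
    exists g. repeat split; auto.
    intro x. apply Rabs_le. split; [|auto].
    pose proof (gle (scal (-1) x)) as L. rewrite gscal, norm_neg in L. lra.
Qed.

Section OperatorNorm.
Variables X Y : NormedSpace.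
Implicit Types (S T : X -> Y) (x : X).

Lemma opnorm_lub T : is_bounded T ->
  is_lub (fun s => exists x, norm x <= 1 /\ s = norm (T x)) (opnorm T).
Proof.
  intros [M HM]. unfold opnorm. apply epsilon_spec.
  destruct (completeness (fun s => exists x, norm x <= 1 /\ s = norm (T x))) as [r Hr];
    [| |exists r; exact Hr].
  - exists (Rabs M). intros s [x [Hx ->]].
    pose proof (HM x). pose proof (norm_ge0 _ x). pose proof (Rle_abs M).
    pose proof (Rabs_pos M). nra.
  - exists (norm (T zero)), zero. split; [rewrite norm_zero; lra | reflexivity].
Qed.

Lemma opnorm_ub T x : is_bounded T -> norm x <= 1 -> norm (T x) <= opnorm T.
Proof. intros Hb Hx. apply (opnorm_lub T Hb). exists x; auto. Qed.

Lemma opnorm_le T M : is_bounded T -> (forall x, norm x <= 1 -> norm (T x) <= M) ->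
  opnorm T <= M.
Proof. intros Hb H. apply (opnorm_lub T Hb). intros s [x [Hx ->]]. auto. Qed.

Lemma opnorm_approx T eta : is_bounded T -> 0 < eta ->
  exists x, norm x <= 1 /\ opnorm T - eta < norm (T x).
Proof.
  intros Hb He. apply NNPP. intro none.
  assert (opnorm T <= opnorm T - eta); [|lra].
  apply opnorm_le; auto. intros x Hx. apply Rnot_lt_le. intro. apply none. eauto.
Qed.

Lemma linear_zero T : is_linear T -> T zero = zero.
Proof. intros [_ Hs]. rewrite <- (scal_zero_l _ zero), Hs. apply scal_zero_l. Qed.

Lemma linear_sub T x x' : is_linear T ->
  T (add x (scal (-1) x')) = add (T x) (scal (-1) (T x')).
Proof. intros [Ha Hs]. rewrite Ha, Hs. reflexivity. Qed.

Lemma opnorm_mul T x : bounded_linear T -> norm (T x) <= opnorm T * norm x.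
Proof.
  intros [Hl Hb]. destruct (classic (x = zero)) as [->|nz].
  - rewrite linear_zero, !norm_zero by exact Hl. lra.
  - pose proof (norm_gt0 _ x nz) as Hp.
    pose proof (opnorm_ub T _ Hb (Req_le _ _ (norm_normalize _ x Hp))) as U.
    rewrite (proj2 Hl), norm_scal, Rabs_right in U by (left; apply Rinv_0_lt_compat, Hp).
    apply (Rmult_le_compat_r (norm x)) in U; [|lra].
    rewrite Rmult_comm, <- Rmult_assoc, Rinv_r, Rmult_1_l in U by lra. exact U.
Qed.

Lemma bounded_linear_add S T : bounded_linear S -> bounded_linear T ->
  bounded_linear (fun x => add (S x) (T x)).
Proof.
  intros [[Sa Ss] [M1 HM1]] [[Ta Ts] [M2 HM2]]. split; [split|].
  - intros x y. rewrite Sa, Ta. apply add_swap.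
  - intros a x. rewrite Ss, Ts, scal_distr_l. reflexivity.
  - exists (M1 + M2). intro x. pose proof (norm_triangle _ (S x) (T x)).
    pose proof (HM1 x). pose proof (HM2 x). lra.
Qed.

Lemma bounded_linear_scal a T : bounded_linear T -> bounded_linear (fun x => scal a (T x)).
Proof.
  intros [[Ta Ts] [M HM]]. split; [split|].
  - intros x y. rewrite Ta, scal_distr_l. reflexivity.
  - intros b x. rewrite Ts, !scal_assoc, Rmult_comm. reflexivity.
  - exists (Rabs a * M). intro x. rewrite norm_scal, Rmult_assoc.
    apply Rmult_le_compat_l; [apply Rabs_pos | apply HM].
Qed.

End OperatorNorm.

Lemma dual_approx (X : NormedSpace) (f : X -> R_NormedSpace) eta :
  bounded_linear f -> 0 < eta -> exists x, norm x <= 1 /\ opnorm f - eta < f x.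
Proof.
  intros Hf He. destruct (opnorm_approx _ _ f eta (proj2 Hf) He) as [x [Hx Hv]].
  simpl in Hv. destruct (Rle_dec 0 (f x)).
  - exists x. rewrite Rabs_right in Hv; auto. lra.
  - exists (scal (-1) x). rewrite norm_neg, (proj2 (proj1 Hf)). simpl.
    rewrite Rabs_left in Hv; lra.
Qed.

Lemma bounded_linear_rank_one (X Y : NormedSpace) (f : X -> R_NormedSpace) (y : Y) :
  bounded_linear f -> bounded_linear (fun x => scal (f x) y).
Proof.
  intros [[fa fs] fb]. split; [split|].
  - intros x x'. rewrite fa. apply scal_distr_r.
  - intros a x. rewrite fs. symmetry; apply scal_assoc.
  - exists (opnorm f * norm y). intro x. rewrite norm_scal.
    pose proof (opnorm_mul _ _ f x (conj (conj fa fs) fb)). pose proof (norm_ge0 _ y).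
    simpl in *. nra.
Qed.

Lemma opnorm_rank_one (X Y : NormedSpace) (f : X -> R_NormedSpace) (y : Y) :
  bounded_linear f -> opnorm (fun x => scal (f x) y) = opnorm f * norm y.
Proof.
  intro Hf. pose proof (norm_ge0 _ y) as Ny.
  pose proof (proj2 (bounded_linear_rank_one X Y f y Hf)) as Hb.
  apply Rle_antisym.
  - apply opnorm_le; auto. intros x Hx. rewrite norm_scal.
    apply Rmult_le_compat_r; [exact Ny | apply (opnorm_ub _ _ f x (proj2 Hf) Hx)].
  - apply Rle_plus_epsilon. intros eta He.
    destruct (dual_approx _ f (eta / (norm y + 1)) Hf) as [x [Hx Hv]].
    { apply Rdiv_lt_0_compat; lra. }
    pose proof (opnorm_ub _ _ _ x Hb Hx) as U. cbv beta in U. rewrite norm_scal in U.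
    assert (opnorm f * norm y - eta * (norm y / (norm y + 1)) <= Rabs (f x) * norm y).
    { pose proof (Rle_abs (f x)).
      replace (opnorm f * norm y - eta * (norm y / (norm y + 1)))
        with ((opnorm f - eta / (norm y + 1)) * norm y) by (field; lra). nra. }
    assert (eta * (norm y / (norm y + 1)) <= eta).
    { rewrite <- (Rmult_1_r eta) at 2. apply Rmult_le_compat_l; [lra|].
      apply (Rmult_le_reg_r (norm y + 1)); [lra|].
      unfold Rdiv. rewrite Rmult_assoc, Rinv_l; lra. }
    lra.
Qed.

Lemma slice_diameter_le (X : NormedSpace) (xs : X -> R_NormedSpace) (d e0 al : R) :
  bounded_linear xs -> 0 < d -> 0 <= e0 -> 0 <= al ->
  (forall h : X -> R_NormedSpace, bounded_linear h -> 0 < opnorm h -> opnorm h < d ->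
     opnorm (fun x => add (xs x) (h x)) + opnorm (fun x => add (xs x) (scal (-1) (h x))) - 2
       <= e0 * opnorm h) ->
  forall x1 x2 : X, norm x1 <= 1 -> norm x2 <= 1 -> 1 - al <= xs x1 -> 1 - al <= xs x2 ->
  norm (add x1 (scal (-1) x2)) <= e0 + 4 * al / d.
Proof.
  intros Hxs Hd He0 Hal flat x1 x2 N1 N2 S1 S2.
  set (w := add x1 (scal (-1) x2)).
  assert (0 <= 4 * al / d) by (apply Rmult_le_pos; [lra | left; apply Rinv_0_lt_compat, Hd]).
  destruct (norm_ge0 _ w) as [Hw|Hw]; [|rewrite <- Hw; lra].
  destruct (norming_functional X w) as [g [Hg [gle gw]]].
  set (h := fun x => scal (d / 2) (g x) : R_NormedSpace).
  assert (Hh : bounded_linear h).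
  { apply bounded_linear_scal. split; [exact Hg|].
    exists 1. intro x. rewrite Rmult_1_l. apply gle. }
  assert (Nh : opnorm h = d / 2).
  { apply Rle_antisym.
    - apply opnorm_le; [apply Hh|]. intros x Hx. unfold h. rewrite norm_scal, Rabs_right by lra.
      pose proof (gle x). simpl in *. nra.
    - pose proof (opnorm_ub _ _ h _ (proj2 Hh) (Req_le _ _ (norm_normalize _ w Hw))) as U.
      unfold h in U. rewrite (proj2 Hg), gw in U. simpl in U.
      rewrite Rinv_l, Rmult_1_r, Rabs_right in U by lra. exact U. }
  pose proof (flat h Hh ltac:(lra) ltac:(lra)) as F. rewrite Nh in F.
  pose proof (opnorm_ub _ _ _ x1 (proj2 (bounded_linear_add _ _ _ _ Hxs Hh)) N1) as A1.
  pose proof (opnorm_ub _ _ _ x2 (proj2 (bounded_linear_add _ _ _ _ Hxs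
                                   (bounded_linear_scal _ _ (-1) h Hh))) N2) as A2.
  assert (Gw : g x1 - g x2 = norm w).
  { rewrite <- gw. unfold w. rewrite (linear_sub _ _ g x1 x2 Hg). simpl. ring. }
  unfold h in F, A1, A2. simpl in F, A1, A2.
  pose proof (Rle_abs (xs x1 + d / 2 * g x1)). pose proof (Rle_abs (xs x2 + -1 * (d / 2 * g x2))).
  assert (d / 2 * norm w <= d / 2 * (e0 + 4 * al / d)).
  { replace (d / 2 * (e0 + 4 * al / d)) with (e0 * (d / 2) + 2 * al) by (field; lra). nra. }
  apply (Rmult_le_reg_l (d / 2)); lra.
Qed.

Lemma not_rough_small_slices (X : NormedSpace) : ~ rough_in (dual_VS X) (in_dual X) ->
  forall eps, 0 < eps -> exists xs : X -> R_NormedSpace,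
    bounded_linear xs /\ opnorm xs = 1 /\ exists d, 0 < d /\
    forall al x1 x2, 0 <= al -> norm x1 <= 1 -> norm x2 <= 1 ->
      1 - al <= xs x1 -> 1 - al <= xs x2 -> norm (add x1 (scal (-1) x2)) <= eps + 4 * al / d.
Proof.
  intros Hnr eps Heps.
  assert (exists xs, in_dual X xs /\ opnorm xs = 1 /\
                     ~ roughness_ge (dual_VS X) (in_dual X) xs eps) as [xs [Hxs [Hxs1 Hr]]].
  { apply NNPP. intro none. apply Hnr. exists eps. split; [exact Heps|].
    intros u Hu Hu1. apply NNPP. intro Nr. apply none. eauto. }
  apply not_all_ex_not in Hr as [d Hr]. apply imply_to_and in Hr as [Hd Hr].
  apply not_all_ex_not in Hr as [e' Hr]. apply imply_to_and in Hr as [He' Hr].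
  exists xs. split; [exact Hxs|]. split; [exact Hxs1|]. exists d. split; [exact Hd|].
  intros al x1 x2 Hal. apply (slice_diameter_le X xs d eps al Hxs Hd (Rlt_le _ _ Heps) Hal).
  intros h Hh Hpos Hlt. apply Rnot_gt_le. intro G. apply Hr. exists h.
  split; [exact Hh|]. split; [exact Hpos|]. split; [exact Hlt|]. simpl in G |- *.
  apply Rlt_gt, (Rmult_lt_reg_r (opnorm h)); [exact Hpos|].
  unfold Rdiv. rewrite Rmult_assoc, Rinv_l, Rmult_1_r by lra. nra.
Qed.

Lemma lincomb_ext (V : VStruct) n c c' (e e' : nat -> V) :
  (forall i, (i < n)%nat -> c i = c' i /\ e i = e' i) -> lincomb n c e = lincomb n c' e'.
Proof.
  induction n as [|n IH]; intro same; simpl; [reflexivity|].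
  rewrite IH by (intros; apply same; lia). destruct (same n) as [-> ->]; [lia | reflexivity].
Qed.

Lemma lincomb_zero_coef (Y : NormedSpace) n (e : nat -> Y) :
  lincomb (V := VS_of Y) n (fun _ => 0) e = zero.
Proof.
  induction n as [|n IH]; simpl; [reflexivity|].
  change (add (lincomb (V := VS_of Y) n (fun _ => 0) e) (scal 0 (e n)) = zero).
  rewrite IH, scal_zero_l. apply add_zero.
Qed.

Definition snoc {A : Type} (s : nat -> A) (n : nat) (a : A) : nat -> A :=
  fun i => if Nat.eq_dec i n then a else s i.

Lemma lincomb_snoc (Y : NormedSpace) n c a (e : nat -> Y) (z : Y) :
  lincomb (V := VS_of Y) (S n) (snoc c n a) (snoc e n z) =
  add (lincomb (V := VS_of Y) n c e) (scal a z).
Proof.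
  change (add (lincomb (V := VS_of Y) n (snoc c n a) (snoc e n z))
              (scal (snoc c n a n) (snoc e n z n)) = add (lincomb (V := VS_of Y) n c e) (scal a z)).
  unfold snoc at 3 4. destruct (Nat.eq_dec n n) as [_|]; [|lia].
  f_equal. apply lincomb_ext. intros i Hi.
  unfold snoc. destruct (Nat.eq_dec i n); [lia | auto].
Qed.

Lemma lincomb_rank_one (X Y : NormedSpace) (f : X -> R_NormedSpace) n c (e : nat -> Y) :
  lincomb (V := Op_VS X Y) n c (fun i x => scal (f x) (e i)) =
  (fun x => scal (f x) (lincomb (V := VS_of Y) n c e)).
Proof.
  induction n as [|n IH]; simpl; apply functional_extensionality; intro x.
  - symmetry; apply scal_zero_r.
  - rewrite IH. simpl. rewrite scal_distr_l, !scal_assoc, Rmult_comm. reflexivity.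
Qed.

Lemma rank_one_norming_point (X Y : NormedSpace) (xs : X -> R_NormedSpace) (S : X -> Y)
    (z : Y) (l g : R) :
  bounded_linear xs -> bounded_linear S -> opnorm S <= 1 ->
  (1 - g) * (norm z + Rabs l) < opnorm (fun x => add (scal (xs x) z) (scal l (S x))) ->
  exists x, norm x <= 1 /\ (1 - xs x) * norm z <= g * (norm z + Rabs l) /\
    (1 - g) * (norm z + Rabs l) <= norm (add (scal (xs x) z) (scal l (S x))).
Proof.
  intros Hxs HS HS1 big.
  set (F := fun x => add (scal (xs x) z) (scal l (S x))) in big.
  assert (HF : bounded_linear F)
    by (apply bounded_linear_add;
        [apply bounded_linear_rank_one, Hxs | apply bounded_linear_scal, HS]).
  destruct (opnorm_approx _ _ F _ (proj2 HF) (proj2 (Rlt_0_minus _ _) big)) as [x0 [Hx0 V0]].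
  (* [F] is odd, so we may assume [xs x >= 0]. *)
  assert (exists x, norm x <= 1 /\ 0 <= xs x /\ (1 - g) * (norm z + Rabs l) < norm (F x))
    as [x [Hx [Px Fx]]].
  { destruct (Rle_dec 0 (xs x0)).
    - exists x0. split; [exact Hx0|]. split; [assumption | lra].
    - exists (scal (-1) x0). rewrite norm_neg, (proj2 (proj1 HF)), norm_neg, (proj2 (proj1 Hxs)).
      simpl. split; [exact Hx0|]. split; lra. }
  exists x. split; [exact Hx|]. unfold F in Fx. split; [|lra].
  pose proof (norm_triangle _ (scal (xs x) z) (scal l (S x))) as T.
  rewrite !norm_scal, (Rabs_right (xs x)) in T by lra.
  pose proof (opnorm_ub _ _ S x (proj2 HS) Hx).
  pose proof (norm_ge0 _ z). pose proof (Rabs_pos l). nra.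
Qed.

Lemma octahedral_rank_one_witness (X Y : NormedSpace) (H : (X -> Y) -> Prop) :
  closed_subspace_L X Y H -> contains_finite_rank X Y H -> octahedral_in (Op_VS X Y) H ->
  forall xs : X -> R_NormedSpace, bounded_linear xs -> opnorm xs = 1 ->
  forall n (e : nat -> Y) g, 0 < g ->
  exists S : X -> Y, bounded_linear S /\ opnorm S = 1 /\
    forall c l, 0 < norm (lincomb (V := VS_of Y) n c e) + Rabs l ->
    exists x, norm x <= 1 /\
      (1 - xs x) * norm (lincomb (V := VS_of Y) n c e)
        <= g * (norm (lincomb (V := VS_of Y) n c e) + Rabs l) /\
      (1 - g) * (norm (lincomb (V := VS_of Y) n c e) + Rabs l)
        <= norm (add (scal (xs x) (lincomb (V := VS_of Y) n c e)) (scal l (S x))).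
Proof.
  intros Hcl Hfr Hoct xs Hxs Hxs1 n e g Hg.
  destruct (Hoct n (fun i x => scal (xs x) (e i)) (fun i _ => Hfr xs (e i) Hxs) (g / 2))
    as [S [HS [HS1 oct]]]; [lra|].
  change (opnorm S = 1) in HS1.
  exists S. split; [exact (proj1 Hcl S HS)|]. split; [exact HS1|].
  intros c l Hpos.
  apply rank_one_norming_point; [exact Hxs | exact (proj1 Hcl S HS) | lra |].
  specialize (oct c l).
  change (opnorm (fun x => add (lincomb (V := Op_VS X Y) n c (fun i x => scal (xs x) (e i)) x)
                               (scal l (S x)))
          >= (1 - g / 2) * (opnorm (lincomb (V := Op_VS X Y) n c (fun i x => scal (xs x) (e i)))
                            + Rabs l)) in oct.
  rewrite lincomb_rank_one, opnorm_rank_one, Hxs1, Rmult_1_l in oct by exact Hxs.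
  nra.
Qed.

Lemma exists_unit_vector (X Y : NormedSpace) (H : (X -> Y) -> Prop) :
  closed_subspace_L X Y H -> octahedral_in (Op_VS X Y) H -> exists y : Y, norm y = 1.
Proof.
  intros Hcl Hoct.
  destruct (Hoct 0%nat (fun _ _ => zero) ltac:(intros; lia) (1 / 2)) as [S [HS [HS1 _]]]; [lra|].
  change (opnorm S = 1) in HS1.
  destruct (opnorm_approx _ _ S (1 / 2) (proj2 (proj1 Hcl S HS))) as [x [_ Hx]]; [lra|].
  exists (scal (/ norm (S x)) (S x)). apply norm_normalize. lra.
Qed.

Section SliceWitness.
Variables (X Y : NormedSpace) (xs : X -> R_NormedSpace) (S : X -> Y) (al D : R) (x0 : X).
Hypotheses (Hxs : bounded_linear xs) (Hxs1 : opnorm xs = 1).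
Hypotheses (HS : bounded_linear S) (HS1 : opnorm S = 1).
Hypothesis slice_diam : forall x1 x2, norm x1 <= 1 -> norm x2 <= 1 ->
  1 - al <= xs x1 -> 1 - al <= xs x2 -> norm (add x1 (scal (-1) x2)) <= D.
Hypotheses (Hx0 : norm x0 <= 1) (Sx0 : 1 - al <= xs x0).

Lemma norm_add_image_ge g z l x : norm x <= 1 -> 1 - al <= xs x ->
  (1 - g) * (norm z + Rabs l) <= norm (add (scal (xs x) z) (scal l (S x))) ->
  (1 - g - al - D) * (norm z + Rabs l) <= norm (add z (scal l (S x0))).
Proof.
  intros Hx Sx big.
  assert (xs x <= 1).
  { pose proof (opnorm_mul _ _ xs x Hxs) as M. rewrite Hxs1 in M.
    pose proof (Rle_abs (xs x)). simpl in M. lra. }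
  assert (0 <= D).
  { pose proof (slice_diam x0 x0 Hx0 Hx0 Sx0 Sx0) as Dx0. rewrite sub_self, norm_zero in Dx0.
    exact Dx0. }
  pose proof (norm_add_shift _ (scal (xs x) z) (scal l (S x)) z) as T1.
  replace (add (scal (xs x) z) (scal (-1) z)) with (scal (xs x - 1) z) in T1
    by (rewrite <- scal_sub, scal_one; reflexivity).
  pose proof (norm_add_shift _ (scal l (S x)) z (scal l (S x0))) as T2.
  rewrite scal_assoc, Rmult_comm, <- scal_assoc, <- scal_distr_l, <- linear_sub in T2
    by exact (proj1 HS).
  rewrite !(add_comm _ (scal l _) z), !norm_scal, Rabs_left1 in * by lra.
  pose proof (opnorm_mul _ _ S (add x (scal (-1) x0)) HS) as M. rewrite HS1 in M.
  pose proof (slice_diam x x0 Hx Hx0 Sx Sx0).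
  pose proof (norm_ge0 _ z). pose proof (Rabs_pos l). nra.
Qed.

Lemma norm_image_ge_of_unit g z0 x : norm z0 = 1 -> norm x <= 1 -> 1 - al <= xs x ->
  (1 - g) * (norm z0 + Rabs 1) <= norm (add (scal (xs x) z0) (scal 1 (S x))) ->
  1 - 2 * (g + al + D) <= norm (S x0).
Proof.
  intros Hz0 Hx Sx big.
  pose proof (norm_add_image_ge g z0 1 x Hx Sx big) as N.
  rewrite Hz0, Rabs_R1, scal_one in N.
  pose proof (norm_triangle _ z0 (S x0)) as Tri. rewrite Hz0 in Tri. lra.
Qed.

Lemma norm_add_normalized_image_ge eps g z l :
  0 < eps <= 1 -> 0 <= g -> g * (1 + 4 / eps) <= al -> g + al + D <= eps ->
  1 / 2 <= norm (S x0) ->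
  eps / 2 * Rabs l < norm z ->
  (forall l', 0 < norm z + Rabs l' -> exists x, norm x <= 1 /\
     (1 - xs x) * norm z <= g * (norm z + Rabs l') /\
     (1 - g) * (norm z + Rabs l') <= norm (add (scal (xs x) z) (scal l' (S x)))) ->
  (1 - eps) * (norm z + Rabs l) <= norm (add z (scal l (scal (/ norm (S x0)) (S x0)))).
Proof.
  intros Heps Hg Hal budget Hm Cz witness.
  assert (Hm1 : norm (S x0) <= 1).
  { pose proof (opnorm_mul _ _ S x0 HS) as M. rewrite HS1 in M. lra. }
  set (l' := l / norm (S x0)).
  rewrite scal_assoc. change (l * / norm (S x0)) with l'.
  assert (Hl' : Rabs l <= Rabs l' <= 2 * Rabs l).
  { unfold l', Rdiv.
    rewrite Rabs_mult, (Rabs_right (/ norm (S x0))) by (left; apply Rinv_0_lt_compat; lra).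
    assert (1 <= / norm (S x0) <= 2).
    { split; apply (Rmult_le_reg_r (norm (S x0))); try lra; rewrite Rinv_l; lra. }
    pose proof (Rabs_pos l). nra. }
  pose proof (Rabs_pos l).
  destruct (witness l') as [x [Hx [Sx big]]]; [nra|].
  assert (Sx' : 1 - xs x <= al).
  { apply (Rmult_le_reg_r (norm z)); [nra|].
    assert (Rabs l' <= 4 / eps * norm z).
    { apply (Rmult_le_reg_l eps); [lra|]. unfold Rdiv.
      replace (eps * (4 * / eps * norm z)) with (4 * norm z) by (field; lra). nra. }
    pose proof (norm_ge0 _ z).
    assert (g * Rabs l' <= g * (4 / eps * norm z)) by (apply Rmult_le_compat_l; lra).
    nra. }
  pose proof (norm_add_image_ge g z l' x Hx ltac:(lra) big) as N.
  pose proof (norm_ge0 _ z). nra.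
Qed.

End SliceWitness.

Lemma octahedral_ineq_of_comparable (Y : NormedSpace) (y z : Y) (l eps : R) :
  norm y = 1 -> 0 <= eps <= 1 ->
  (eps / 2 * Rabs l < norm z -> eps / 2 * norm z < Rabs l ->
     (1 - eps) * (norm z + Rabs l) <= norm (add z (scal l y))) ->
  (1 - eps) * (norm z + Rabs l) <= norm (add z (scal l y)).
Proof.
  intros Hy Heps comparable.
  assert (Nly : norm (scal l y) = Rabs l) by (rewrite norm_scal, Hy; ring).
  pose proof (norm_ge0 _ z). pose proof (Rabs_pos l).
  destruct (Rlt_dec (eps / 2 * Rabs l) (norm z)) as [Cz|Cz].
  - destruct (Rlt_dec (eps / 2 * norm z) (Rabs l)) as [Cl|Cl]; [auto|].
    pose proof (norm_add_ge _ z (scal l y)) as L. rewrite Nly in L. nra.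
  - pose proof (norm_add_ge _ (scal l y) z) as L. rewrite Nly, add_comm in L. nra.
Qed.

Lemma slice_budget eps d : 0 < eps -> 0 < d -> exists g, 0 < g /\
  g + g * (1 + 4 / eps) + (eps / 4 + 4 * (g * (1 + 4 / eps)) / d) = eps.
Proof.
  intros He Hd.
  assert (0 < 4 / eps) by (apply Rdiv_lt_0_compat; lra).
  assert (0 < 4 * (1 + 4 / eps) / d) by (apply Rdiv_lt_0_compat; lra).
  exists (3 * eps / 4 / (1 + (1 + 4 / eps) + 4 * (1 + 4 / eps) / d)). split.
  - apply Rdiv_lt_0_compat; lra.
  - field. repeat split; nra.
Qed.

Lemma octahedral_approx (X Y : NormedSpace) (H : (X -> Y) -> Prop) :
  closed_subspace_L X Y H -> contains_finite_rank X Y H -> octahedral_in (Op_VS X Y) H ->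
  ~ rough_in (dual_VS X) (in_dual X) ->
  forall n (e : nat -> Y) eps, 0 < eps <= 1 / 4 ->
  exists y : Y, norm y = 1 /\ forall c l,
    (1 - eps) * (norm (lincomb (V := VS_of Y) n c e) + Rabs l)
      <= norm (add (lincomb (V := VS_of Y) n c e) (scal l y)).
Proof.
  intros Hcl Hfr Hoct Hnr n e eps Heps.
  destruct (exists_unit_vector X Y H Hcl Hoct) as [z0 Hz0].
  destruct (not_rough_small_slices X Hnr (eps / 4)) as [xs [Hxs [Hxs1 [d [Hd slice]]]]]; [lra|].
  destruct (slice_budget eps d) as [g [Hg budget]]; [lra | exact Hd |].
  set (al := g * (1 + 4 / eps)) in budget.
  assert (Hal : 2 * g <= al).
  { assert (4 / eps * eps = 4) by (field; lra). unfold al. nra. }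
  destruct (dual_approx X xs al Hxs) as [x0 [Hx0 Sx0]]; [lra|]. rewrite Hxs1 in Sx0.
  destruct (octahedral_rank_one_witness X Y H Hcl Hfr Hoct xs Hxs Hxs1 (S n) (snoc e n z0) g Hg)
    as [T [HT [HT1 witness]]].
  assert (Hal0 : 0 <= al) by lra.
  pose (slice_al x1 x2 := slice al x1 x2 Hal0).
  (* The extra vector [z0] forces [T x0] to have norm close to 1. *)
  assert (Hm : 1 / 2 <= norm (T x0)).
  { assert (Lz0 : lincomb (V := VS_of Y) (S n) (snoc (fun _ => 0) n 1) (snoc e n z0) = z0)
      by (rewrite lincomb_snoc, lincomb_zero_coef, add_zero_l, scal_one; reflexivity).
    destruct (witness (snoc (fun _ => 0) n 1) 1) as [x [Hx [Sx big]]];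
      rewrite Lz0 in *; [rewrite Hz0, Rabs_R1; lra|].
    rewrite Hz0, Rabs_R1 in Sx.
    pose proof (norm_image_ge_of_unit X Y xs T al _ x0 Hxs Hxs1 HT HT1 slice_al Hx0
                  ltac:(lra) g z0 x Hz0 Hx ltac:(lra) big).
    lra. }
  exists (scal (/ norm (T x0)) (T x0)). split; [apply norm_normalize; lra|].
  intros c l. apply octahedral_ineq_of_comparable; [apply norm_normalize; lra | lra |].
  intros Cz _.
  apply (norm_add_normalized_image_ge X Y xs T al _ x0 Hxs Hxs1 HT HT1 slice_al Hx0
           ltac:(lra) eps g); [lra | lra | apply Rle_refl | lra | exact Hm | exact Cz |].
  intros l' Hpos.
  assert (Lz : lincomb (V := VS_of Y) (S n) (snoc c n 0) (snoc e n z0)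
               = lincomb (V := VS_of Y) n c e)
    by (rewrite lincomb_snoc, scal_zero_l, add_zero; reflexivity).
  rewrite <- Lz. apply witness. rewrite Lz. exact Hpos.
Qed.

Theorem mainTheorem12 (X Y : NormedSpace) (H : (X -> Y) -> Prop) :
  Banach X -> Banach Y ->
  closed_subspace_L X Y H ->
  contains_finite_rank X Y H ->
  octahedral_in (Op_VS X Y) H ->
  ~ rough_in (dual_VS X) (in_dual X) ->
  octahedral Y.
Proof.
  intros _ _ Hcl Hfr Hoct Hnr n e _ eps Heps.
  set (eps' := Rmin eps (1 / 4)).
  assert (Heps' : 0 < eps' <= 1 / 4) by (split; [apply Rmin_glb_lt | apply Rmin_r]; lra).
  destruct (octahedral_approx X Y H Hcl Hfr Hoct Hnr n e eps' Heps') as [y [Hy approx]].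
  exists y. split; [exact I|]. split; [exact Hy|]. intros c l.
  apply Rle_ge, (Rle_trans _ ((1 - eps') * (norm (lincomb (V := VS_of Y) n c e) + Rabs l))).
  - apply Rmult_le_compat_r; [pose proof (norm_ge0 _ (lincomb (V := VS_of Y) n c e));
      pose proof (Rabs_pos l); lra | pose proof (Rmin_l eps (1 / 4)); unfold eps'; lra].
  - apply approx.
Qed.
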